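(* Let $Q$ be a quiver with no oriented cycles, $\theta\in\mathbb{Z}^{Q_0}$, and $\alpha_1\ne\alpha_2\in Q_1$ arrows with $\alpha_1^-=\alpha_2^-$, $\alpha_1^+=\alpha_2^+$; let $Q'$, $F$, $F'$, $\varphi$, $\varphi'$, $\pi$ be as in the context. If $u,v\in F$ are monomials with $\varphi(u)=\varphi(v)$ and $\pi(u)=\pi(v)$, then $u-v$ lies in the ideal $J$ of $F$ generated by $\mathcal{G}_2=\{t_mt_n-t_{m+\varepsilon_2-\varepsilon_1}t_{n+\varepsilon_1-\varepsilon_2}\mid m,n\in\nabla(Q,\theta)\cap\mathbb{Z}^{Q_1},\ m(\alpha_1)>0,\ n(\alpha_2)>0\}$, where $\varepsilon_i\in\mathbb{Z}^{Q_1}$ is the characteristic function of $\alpha_i$.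
   Context: For a quiver $Q$ (vertices $Q_0$, arrows $Q_1$, $a$ from $a^-$ to $a^+$) and $\theta\in\mathbb{Z}^{Q_0}$, $\nabla(Q,\theta)=\{x\in\mathbb{R}_{\ge0}^{Q_1}\mid\forall v:\ \theta(v)=\sum_{a^+=v}x(a)-\sum_{a^-=v}x(a)\}$. $x^m=\prod_ax(a)^{m(a)}$ in $\mathbb{C}[x(a)\mid a\in Q_1]$; $\mathcal{A}(Q,\theta)$ is the subalgebra generated by $x^m$ for $m\in\nabla(Q,\theta)\cap\mathbb{Z}^{Q_1}$; $F=\mathbb{C}[t_m\mid m\in\nabla(Q,\theta)\cap\mathbb{Z}^{Q_1}]$ and $\varphi:F\to\mathcal{A}(Q,\theta)$, $t_m\mapsto x^m$. $Q'$ is obtained from $Q$ by collapsing $\alpha_1,\alpha_2$ to one arrow $\alpha$; $F'$, $\varphi'$ are defined analogously for $(Q',\theta)$. $\pi:\mathbb{Z}^{Q_1}\to\mathbb{Z}^{Q'_1}$ is $\pi(m)(\alpha)=m(\alpha_1)+m(\alpha_2)$, $\pi(m)(\beta)=m(\beta)$ for other arrows; it maps $\nabla(Q,\theta)\cap\mathbb{Z}^{Q_1}$ to $\nabla(Q',\theta)\cap\mathbb{Z}^{Q'_1}$, and $\pi:F\to F'$ is the algebra map $t_m\mapsto t_{\pi(m)}$. *)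

(* multinomials' monoid algebras {malg R[{cmonom I}]} serve as
   polynomial rings in (possibly non-finitely-enumerated) variables indexed
   by a choiceType I. *)
From HB Require Import structures.
From mathcomp Require Import all_boot all_order all_algebra.
From mathcomp Require Import finmap.
From mathcomp Require Import monalg.
From mathcomp Require Import Rstruct complex.
From Stdlib Require Rdefinitions.

Set Implicit Arguments.
Unset Strict Implicit.
Unset Printing Implicit Defensive.

Import Order.TTheory GRing.Theory Num.Theory.
Local Open Scope ring_scope.

Definition CC : fieldType := (Rdefinitions.R)[i].

Section Quiver.
Variables (V A : finType) (src tgt : A -> V).
(* src a = a^-, tgt a = a^+ *)

Definition no_oriented_cycles : Prop :=
  forall (a : A) (p : seq A),
    ~~ (path (fun b c => tgt b == src c) a p && (tgt (last a p) == src a)).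

Definition in_nabla (theta : V -> int) (m : {ffun A -> nat}) : bool :=
  [forall v : V, theta v ==
     (\sum_(a | tgt a == v) (m a)%:Z - \sum_(a | src a == v) (m a)%:Z)].

Definition latt (theta : V -> int) := {m : {ffun A -> nat} | in_nabla theta m}.

Definition Fring (theta : V -> int) := {malg CC[{cmonom latt theta}]}.

Definition tvar (theta : V -> int) (m : latt theta) : Fring theta :=
  << ucm m >>.

Definition tmon (theta : V -> int) (u : {cmonom latt theta}) : Fring theta :=
  << u >>.

Definition Xring := {malg CC[{cmonom A}]}.

Definition xmon (m : {ffun A -> nat}) : Xring :=
  \prod_(a : A) (<< ucm a >> : Xring) ^+ (m a).

Definition phi (theta : V -> int) (f : Fring theta) : Xring :=
  mmap (fun c : CC => c%:MP) 
       (fun u : {cmonom latt theta} =>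
          \prod_(m <- finsupp u) xmon (val m) ^+ (u m)) f.

End Quiver.

(* The quiver Q' obtained by collapsing alpha1, alpha2 into one arrow alpha:
   its arrows are those of Q except alpha2, the arrow alpha1 now playing the
   role of the collapsed arrow alpha (same endpoints). *)
Section Collapse.
Variables (V A : finType) (src tgt : A -> V) (alpha1 alpha2 : A).

Definition arrQ' : finType := {a : A | a != alpha2}.
Definition srcQ' (b : arrQ') : V := src (val b).
Definition tgtQ' (b : arrQ') : V := tgt (val b).

Definition piZ (m : {ffun A -> nat}) : {ffun arrQ' -> nat} :=
  [ffun b : arrQ' => m (val b) + (if val b == alpha1 then m alpha2 else 0)%N].

Variable theta : V -> int.

Definition Fring' := Fring srcQ' tgtQ' theta.

(* pi : F -> F', the algebra map t_m |-> t_{pi(m)}.  (pi maps lattice points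
   of nabla(Q,theta) to lattice points of nabla(Q',theta) when alpha1, alpha2
   are distinct and parallel, so the fallback branch "0" is never used in
   that situation.) *)
Definition pi_var (m : latt src tgt theta) : Fring' :=
  match insub (piZ (val m)) with
  | Some m' => tvar m'
  | None => 0
  end.

Definition piF (f : Fring src tgt theta) : Fring' :=
  mmap (fun c : CC => c%:MP)
       (fun u : {cmonom latt src tgt theta} =>
          \prod_(m <- finsupp u) pi_var m ^+ (u m)) f.

Definition eps (a0 : A) (a : A) : int := (a == a0)%:Z.

Definition G2 (g : Fring src tgt theta) : Prop :=
  exists m n m' n' : latt src tgt theta,
    [/\ (0 < val m alpha1)%N, (0 < val n alpha2)%N,
        (forall a, (val m' a)%:Z = (val m a)%:Z + eps alpha2 a - eps alpha1 a),
        (forall a, (val n' a)%:Z = (val n a)%:Z + eps alpha1 a - eps alpha2 a)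
      & g = tvar m * tvar n - tvar m' * tvar n'].

End Collapse.

Definition in_ideal_gen (R : comNzRingType) (S : R -> Prop) (x : R) : Prop :=
  exists s : seq (R * R), (forall p, p \in s -> S p.2) /\
    x = \sum_(p <- s) p.1 * p.2.

(* Write u and v as products of variables t_m.  Since pi(u) = pi(v), the
   factors can be paired so that paired lattice points have the same image
   under pi: they agree off alpha1, alpha2 and have the same m(alpha1) +
   m(alpha2).  Since phi(u) = phi(v), the alpha1-coordinates have the same
   total on both sides of the pairing.  While some pair is unbalanced there is
   a pair (m, n) with m(alpha1) > n(alpha1) and a pair (m', n') with
   m'(alpha1) < n'(alpha1); a generator of G_2 replaces t_m t_m' by
   t_{m+eps2-eps1} t_{m'+eps1-eps2} modulo J, which lowers the total excess
   sum (m(alpha1) - n(alpha1))_+.  With no excess left the pairs coincide. *)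

From HB Require Import structures.
From mathcomp Require Import all_boot all_order all_algebra.
From mathcomp Require Import finmap monalg.
From mathcomp Require Import zify.

Set Implicit Arguments.
Unset Strict Implicit.
Unset Printing Implicit Defensive.

Import GRing.Theory.
Local Open Scope ring_scope.

Section IdealCongruence.
Variables (R : comNzRingType) (S : R -> Prop).

Lemma in_ideal_gen0 : in_ideal_gen S 0.
Proof. by exists [::]; rewrite big_nil. Qed.

Lemma in_ideal_genD x y :
  in_ideal_gen S x -> in_ideal_gen S y -> in_ideal_gen S (x + y).
Proof.
case=> s [Ss ->] [t [St ->]]; exists (s ++ t); split; last by rewrite big_cat.
by move=> p; rewrite mem_cat => /orP[]; [apply: Ss | apply: St].
Qed.

Lemma in_ideal_genMl x y : in_ideal_gen S x -> in_ideal_gen S (y * x).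
Proof.
case=> s [Ss ->]; exists [seq (y * p.1, p.2) | p <- s]; split.
  by move=> q /mapP[p sp ->] /=; apply: Ss.
by rewrite big_map mulr_sumr; apply: eq_bigr => p _; rewrite mulrA.
Qed.

Definition ideal_congr x y := in_ideal_gen S (x - y).

Lemma ideal_congr_refl x : ideal_congr x x.
Proof. by rewrite /ideal_congr subrr; apply: in_ideal_gen0. Qed.

Lemma ideal_congr_gen x y : S (x - y) -> ideal_congr x y.
Proof.
move=> Sxy; exists [:: (1, x - y)]; rewrite big_seq1 mul1r; split=> //.
by move=> p; rewrite inE => /eqP ->.
Qed.

Lemma ideal_congr_trans x y z :
  ideal_congr x y -> ideal_congr y z -> ideal_congr x z.
Proof.
move=> Ixy Iyz; rewrite /ideal_congr -[x](subrK y) -addrA.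
exact: in_ideal_genD.
Qed.

Lemma ideal_congrMr x y z : ideal_congr x y -> ideal_congr (x * z) (y * z).
Proof. by rewrite /ideal_congr -mulrBl mulrC; apply: in_ideal_genMl. Qed.

Lemma ideal_congr_exchange a b a' b' c d :
  ideal_congr (a * b) (a' * b') -> ideal_congr (a' * (b' * c)) d ->
  ideal_congr (a * (b * c)) d.
Proof.
move=> Eab Ed; rewrite mulrA; apply: ideal_congr_trans (ideal_congrMr c Eab) _.
by rewrite -mulrA.
Qed.

End IdealCongruence.

Section MonomialAlgebra.
Variables (K : monomType) (R : nzRingType).

Lemma malgUM (k1 k2 : K) :
  << mmul k1 k2 >> = << k1 >> * << k2 >> :> {malg R[K]}.
Proof. by rewrite malgM_def fgmulUU mulr1. Qed.

Lemma malgU1 : << mone >> = 1 :> {malg R[K]}.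
Proof. exact: mpolyC1E. Qed.

Lemma malgU_prod (T : Type) (s : seq T) (F : T -> K) :
  << \big[mmul/mone]_(x <- s) F x >> = \prod_(x <- s) << F x >> :> {malg R[K]}.
Proof. exact: (big_morph _ malgUM malgU1). Qed.

Lemma malgU_inj (k1 k2 : K) : << k1 >> = << k2 >> :> {malg R[K]} -> k1 = k2.
Proof.
move=> /(congr1 (mcoeff k1)); rewrite !mcoeffU1 eqxx.
by case: eqP => // _ /eqP; rewrite oner_eq0.
Qed.

End MonomialAlgebra.

Lemma mmap_malgCU (K K' : monomType) (R : comNzRingType)
    (h : K -> {malg R[K']}) (k : K) :
  mmap (fun c : R => c%:MP) h << k >> = h k.
Proof. rewrite mmapU; exact: mul1r. Qed.

Section CmonomProducts.
Variable I : choiceType.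

Lemma cm_prod (T : Type) (s : seq T) (F : T -> {cmonom I}) i :
  (\big[mmul/mone]_(x <- s) F x) i = (\sum_(x <- s) F x i)%N.
Proof. exact: (big_morph (fun k : {cmonom I} => k i) (cmM i) (cm1 i)). Qed.

Lemma cm_prod_ucm (s : seq I) i :
  (\big[mmul/mone]_(x <- s) ucm x) i = count_mem i s.
Proof.
by elim: s => [|x s IH]; rewrite ?big_nil ?cm1 // big_cons cmM IH cmU.
Qed.

Lemma cm_prod_ucm_perm (s t : seq I) :
  \big[mmul/mone]_(x <- s) ucm x = \big[mmul/mone]_(x <- t) ucm x ->
  perm_eq s t.
Proof. by move=> E; apply/allP => i _ /=; rewrite -!cm_prod_ucm E. Qed.

Lemma cmonom_prod_ucm (u : {cmonom I}) :
  exists s : seq I, u = \big[mmul/mone]_(x <- s) ucm x.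
Proof.
move Hd: (mdeg u) => n; elim: n u Hd => [|n IH] u Hd.
  by exists [::]; rewrite big_nil; apply: mdeg_eq0I.
have [i iu] : exists i, i \in finsupp u.
  by apply/fset0Pn/eqP => E; move: Hd; rewrite mdegE E big_seq_fset0.
have Eu : u = mmul (ucm i) (divcm u (ucm i)).
  apply/eqP/cmP => j; rewrite cmM divcmE cmU.
  by move: iu; rewrite -cmE_neq0; case: (i =P j) => [->|]; lia.
have [s Es] : exists s, divcm u (ucm i) = \big[mmul/mone]_(x <- s) ucm x.
  by apply: IH; move: Hd; rewrite {1}Eu mdegM mdegU; lia.
by exists (i :: s); rewrite big_cons -Es.
Qed.

End CmonomProducts.

Section CmonomEvaluation.
Variables (I : choiceType) (R : comNzRingType) (w : I -> R).
Local Open Scope fset_scope.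

Definition cmeval (u : {cmonom I}) := \prod_(i <- finsupp u) w i ^+ u i.

Lemma cmevalEw (u : {cmonom I}) (d : {fset I}) : finsupp u `<=` d ->
  cmeval u = \prod_(i <- d) w i ^+ u i.
Proof.
move=> ud; apply: big_fset_incl => // i _.
by rewrite -cmE_eq0 => /eqP ->; rewrite expr0.
Qed.

Lemma cmeval_prod_ucm (s : seq I) :
  cmeval (\big[mmul/mone]_(x <- s) ucm x) = \prod_(x <- s) w x.
Proof.
elim: s => [|i s IH]; first by rewrite !big_nil /cmeval mdom1 big_nil.
rewrite !big_cons -IH; set u := \big[mmul/mone]_(x <- s) ucm x.
have sub_iu : finsupp (mmul (ucm i) u) `<=` [fset i] `|` finsupp u.
  by rewrite mdomD mdomU.
rewrite (cmevalEw sub_iu) (cmevalEw (fsubsetUr [fset i] (finsupp u))).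
under eq_bigr => j _ do rewrite cmM exprD.
rewrite big_split /= (bigD1_seq i) ?fset_uniq ?inE ?eqxx //= cmUU expr1.
by rewrite big1 ?mulr1 // => j ji; rewrite cmU eq_sym (negbTE ji).
Qed.

End CmonomEvaluation.

Section FfunMonomials.
Variable A : finType.

Definition cmonom_of_ffun (m : {ffun A -> nat}) : {cmonom A} :=
  \big[mmul/mone]_(a : A) \big[mmul/mone]_(i < m a) ucm a.

Lemma cmonom_of_ffunE m a : cmonom_of_ffun m a = m a.
Proof.
rewrite /cmonom_of_ffun cm_prod (bigD1 a) // cm_prod.
rewrite (eq_bigr (fun=> 1%N)) => [|i _]; last by rewrite cmUU.
rewrite sum1_card card_ord big1 => [|b ba]; first exact: addn0.
by rewrite cm_prod big1 // => i _; rewrite cmU (negbTE ba).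
Qed.

Lemma xmonE m : xmon m = << cmonom_of_ffun m >>.
Proof.
rewrite /xmon /cmonom_of_ffun malgU_prod; apply: eq_bigr => a _.
by rewrite malgU_prod prodr_const card_ord.
Qed.

End FfunMonomials.

Lemma perm_map_pairing (T1 T2 : eqType) (f : T1 -> T2) (s t : seq T1) :
  perm_eq (map f s) (map f t) ->
  exists z : seq (T1 * T1), [/\ unzip1 z = s, perm_eq (unzip2 z) t &
     forall p, p \in z -> f p.1 = f p.2].
Proof.
elim: s t => [|x s IH] t /=.
  by move/perm_size; rewrite size_map; case: t => // _; exists [::].
move=> Est; have : f x \in map f t by rewrite -(perm_mem Est) mem_head.
case/mapP => y yt fxy; have Et := perm_to_rem yt.
have /IH[z [z1 z2 fz]] : perm_eq (map f s) (map f (rem y t)).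
  by rewrite -(perm_cons (f x)) (perm_trans Est) // fxy -map_cons perm_map.
exists ((x, y) :: z); split=> /=; first by rewrite z1.
  by rewrite perm_sym (perm_trans Et) // perm_cons perm_sym.
by move=> p; rewrite inE => /orP[/eqP -> //|]; apply: fz.
Qed.

Lemma exists_lt_of_sum_eq (T : eqType) (z : seq T) (f g : T -> nat) p :
  (\sum_(q <- z) f q = \sum_(q <- z) g q)%N -> p \in z -> (f p < g p)%N ->
  exists2 q, q \in z & (g q < f q)%N.
Proof.
move=> Efg zp fgp; apply/hasP; apply: contraTT isT => /hasPn gf.
have le_fg q : q \in z -> (f q <= g q)%N by move=> /gf; rewrite -leqNgt.
have : (\sum_(q <- z | q \in z) (g q - f q) == 0)%N.
  by rewrite sumnB // -!big_seq Efg subnn.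
by rewrite sum_nat_seq_eq0 => /allP/(_ p zp); rewrite zp subn_eq0 leqNgt fgp.
Qed.

Lemma perm_to_rem2 (T : eqType) (z : seq T) p q : p \in z -> q \in z -> q != p ->
  perm_eq z (p :: q :: rem q (rem p z)).
Proof.
move=> zp zq qp; have zpq : q \in rem p z.
  by move: zq; rewrite (perm_mem (perm_to_rem zp)) inE (negbTE qp).
by rewrite (perm_trans (perm_to_rem zp)) // perm_cons perm_to_rem.
Qed.

Section ArrowShift.
Variables (V A : finType) (src tgt : A -> V) (theta : V -> int).

(* Moves one unit from [y] to [x]; meaningful only when [0 < f y], since
   subtraction is truncated. *)
Definition shift_ffun (f : {ffun A -> nat}) (x y : A) : {ffun A -> nat} :=
  [ffun a => (f a + (a == x) - (a == y))%N].

Lemma shift_ffunE (f : {ffun A -> nat}) (x y a : A) : x != y -> (0 < f y)%N ->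
  (shift_ffun f x y a)%:Z = (f a)%:Z + eps x a - eps y a.
Proof.
move=> xy fy; rewrite ffunE /eps; case: (a =P y) => [->|_].
  by rewrite eq_sym (negbTE xy) /=; lia.
by case: (a == x) => /=; lia.
Qed.

Lemma sum_eps (P : pred A) (x : A) : \sum_(a | P a) eps x a = (P x)%:Z.
Proof.
rewrite big_mkcond (bigD1 x) //= big1 => [|a /negbTE ax]; rewrite /eps ?ax.
  by rewrite eqxx addr0; case: (P x).
by case: (P a).
Qed.

Lemma in_nabla_shift (f f' : {ffun A -> nat}) (x y : A) :
  src x = src y -> tgt x = tgt y -> in_nabla src tgt theta f ->
  (forall a, (f' a)%:Z = (f a)%:Z + eps x a - eps y a) ->
  in_nabla src tgt theta f'.
Proof.
move=> sxy txy /forallP Hf Ef'; apply/forallP => v; move/eqP: (Hf v) ->.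
rewrite !(eq_bigr _ (fun a _ => Ef' a)) !sumrB !big_split /= !sum_eps sxy txy.
by rewrite !addrK.
Qed.

Definition shiftL (m : latt src tgt theta) (x y : A) : latt src tgt theta :=
  insubd m (shift_ffun (val m) x y).

Lemma shiftLE (m : latt src tgt theta) (x y : A) :
  x != y -> src x = src y -> tgt x = tgt y -> (0 < val m y)%N ->
  val (shiftL m x y) = shift_ffun (val m) x y.
Proof.
move=> xy sxy txy my; rewrite insubdK //.
exact: (in_nabla_shift sxy txy (valP m) (fun a => shift_ffunE a xy my)).
Qed.

End ArrowShift.

Section MonomialImages.
Variables (V A : finType) (src tgt : A -> V) (theta : V -> int).
Local Notation L := (latt src tgt theta).

Lemma tmon_prod (u : {cmonom L}) (s : seq L) :
  u = \big[mmul/mone]_(x <- s) ucm x -> tmon u = \prod_(x <- s) tvar x.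
Proof. by move=> ->; rewrite /tmon malgU_prod. Qed.

Lemma phi_tmon (u : {cmonom L}) (s : seq L) :
  u = \big[mmul/mone]_(x <- s) ucm x ->
  phi (tmon u) = << \big[mmul/mone]_(x <- s) cmonom_of_ffun (val x) >>.
Proof.
have -> : phi (tmon u) = cmeval (fun x : L => xmon (val x)) u by exact: mmap_malgCU.
move=> ->; rewrite cmeval_prod_ucm malgU_prod.
by apply: eq_bigr => x _; rewrite xmonE.
Qed.

Lemma sum_latt_eq_of_phi (u v : {cmonom L}) (su sv : seq L) :
  u = \big[mmul/mone]_(x <- su) ucm x -> v = \big[mmul/mone]_(x <- sv) ucm x ->
  phi (tmon u) = phi (tmon v) ->
  forall a, (\sum_(x <- su) val x a = \sum_(x <- sv) val x a)%N.
Proof.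
move=> Eu Ev Euv a; have := phi_tmon Eu.
rewrite Euv (phi_tmon Ev) => /malgU_inj/(congr1 (fun k : {cmonom A} => k a)).
by rewrite /= !cm_prod !(eq_bigr _ (fun x _ => cmonom_of_ffunE (val x) a)) => ->.
Qed.

End MonomialImages.

Section Collapse.
Variables (V A : finType) (src tgt : A -> V) (theta : V -> int) (a1 a2 : A).
Hypotheses (a12 : a1 != a2) (src12 : src a1 = src a2) (tgt12 : tgt a1 = tgt a2).
Local Notation L := (latt src tgt theta).
Local Notation L' := (latt (srcQ' src (alpha2:=a2)) (tgtQ' tgt (alpha2:=a2)) theta).
Local Notation piZ := (piZ a1 a2).

Lemma piZ_collapsed (f g : {ffun A -> nat}) :
  piZ f = piZ g -> (f a1 + f a2 = g a1 + g a2)%N.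
Proof.
move/(congr1 (fun h : {ffun arrQ' a2 -> nat} => h (Sub a1 a12))).
by rewrite !ffunE /= eqxx.
Qed.

Lemma piZ_inj_a1 (f g : {ffun A -> nat}) : piZ f = piZ g -> f a1 = g a1 -> f = g.
Proof.
move=> Efg fg1; apply/ffunP => a; have := piZ_collapsed Efg.
case: (a =P a1) => [-> //|/eqP aa1]; case: (a =P a2) => [-> | /eqP aa2]; first lia.
move/(congr1 (fun h : {ffun arrQ' a2 -> nat} => h (Sub a aa2))): Efg.
by rewrite !ffunE /= (negbTE aa1) !addr0 => ->.
Qed.

Lemma piZ_shift (f : {ffun A -> nat}) (x y : A) :
  x != y -> x \in [:: a1; a2] -> y \in [:: a1; a2] -> (0 < f y)%N ->
  piZ (shift_ffun f x y) = piZ f.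
Proof.
move=> xy x12 y12 fy; apply/ffunP => -[b b2]; rewrite !ffunE /=.
move: x12 y12 xy fy; rewrite !inE => /orP[]/eqP-> /orP[]/eqP->.
all: rewrite ?eqxx // => _ fy.
all: rewrite (negbTE b2) ?(eq_sym a2) (negbTE a12).
all: by case: (b =P a1) => [->|_] /=; rewrite ?eqxx ?(negbTE a12) /=; lia.
Qed.

Lemma sum_arrQ' (F : A -> int) :
  \sum_(a | a != a2) F a = \sum_(b : arrQ' a2) F (val b).
Proof.
rewrite (reindex_omap (val : arrQ' a2 -> A) insub) => [|a a2a]; last by rewrite insubT.
by apply: eq_bigl => -[a a2a] /=; rewrite insubT /= eqxx a2a.
Qed.

Lemma sum_piZ (g : A -> V) (v : V) (f : {ffun A -> nat}) : g a1 = g a2 ->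
  \sum_(b : arrQ' a2 | g (val b) == v) (piZ f b)%:Z = \sum_(a | g a == v) (f a)%:Z.
Proof.
move=> g12; rewrite big_mkcond [RHS]big_mkcond [RHS](bigD1 a2) //= addrC.
pose F a := (if g a == v then (f a)%:Z else 0) +
  (if (g a == v) && (a == a1) then (f a2)%:Z else 0).
rewrite (eq_bigr (F \o val)) => [|b _]; last first.
  by rewrite ffunE /F /=; case: (g _ == v); case: (val b == a1);
    rewrite /= ?addn0 ?addr0.
rewrite -sum_arrQ' big_split /=; congr (_ + _).
rewrite (bigD1 a1) //= big1 => [|a /andP[_ a1a]]; last by rewrite (negbTE a1a) andbF.
by rewrite eqxx andbT g12 addr0.
Qed.

Lemma in_nabla_piZ (m : L) :
  in_nabla (srcQ' src (alpha2:=a2)) (tgtQ' tgt (alpha2:=a2)) theta (piZ (val m)).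
Proof.
apply/forallP => v; have /forallP/(_ v) := valP m.
by rewrite /srcQ' /tgtQ' !sum_piZ.
Qed.

Definition piL (m : L) : L' := Sub (piZ (val m)) (in_nabla_piZ m).

Lemma pi_varE (m : L) : pi_var a1 a2 m = tvar (piL m).
Proof. by rewrite /pi_var (insubT _ (in_nabla_piZ m)). Qed.

Lemma perm_piL_of_piF (u v : {cmonom L}) (su sv : seq L) :
  u = \big[mmul/mone]_(x <- su) ucm x -> v = \big[mmul/mone]_(x <- sv) ucm x ->
  piF a1 a2 (tmon u) = piF a1 a2 (tmon v) -> perm_eq (map piL su) (map piL sv).
Proof.
have piF_tmon (w : {cmonom L}) s : w = \big[mmul/mone]_(x <- s) ucm x ->
    piF a1 a2 (tmon w) = << \big[mmul/mone]_(y <- map piL s) ucm y >>.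
  have -> : piF a1 a2 (tmon w) = cmeval (@pi_var _ _ src tgt a1 a2 theta) w.
    exact: mmap_malgCU.
  move=> ->; rewrite cmeval_prod_ucm big_map malgU_prod.
  by apply: eq_bigr => x _; rewrite pi_varE.
move=> Eu Ev Euv; have := piF_tmon _ _ Eu.
by rewrite Euv (piF_tmon _ _ Ev) => /malgU_inj/cm_prod_ucm_perm; rewrite perm_sym.
Qed.

Lemma shiftL21 (m : L) : (0 < val m a1)%N ->
  piZ (val (shiftL m a2 a1)) = piZ (val m) /\
  val (shiftL m a2 a1) a1 = (val m a1 - 1)%N.
Proof.
have a21 : a2 != a1 by rewrite eq_sym.
move=> m1; rewrite (shiftLE a21 (esym src12) (esym tgt12) m1).
split; first by rewrite piZ_shift ?inE ?eqxx ?orbT.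
by rewrite ffunE eqxx (eq_sym a1) (negbTE a21) /= addn0.
Qed.

Lemma shiftL12 (m : L) : (0 < val m a2)%N ->
  piZ (val (shiftL m a1 a2)) = piZ (val m) /\
  val (shiftL m a1 a2) a1 = (val m a1).+1.
Proof.
move=> m2; rewrite (shiftLE a12 src12 tgt12 m2).
split; first by rewrite piZ_shift ?inE ?eqxx ?orbT.
by rewrite ffunE eqxx (negbTE a12) /= subn0 addn1.
Qed.

Local Notation G2 := (G2 a1 a2 (theta:=theta)).

Lemma tvar_exchange (m m' : L) : (0 < val m a1)%N -> (0 < val m' a2)%N ->
  ideal_congr G2 (tvar m * tvar m') (tvar (shiftL m a2 a1) * tvar (shiftL m' a1 a2)).
Proof.
have a21 : a2 != a1 by rewrite eq_sym.
move=> m1 m'2; apply: ideal_congr_gen.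
exists m, m', (shiftL m a2 a1), (shiftL m' a1 a2); split=> // a.
  by rewrite (shiftLE a21 (esym src12) (esym tgt12) m1) shift_ffunE.
by rewrite (shiftLE a12 src12 tgt12 m'2) shift_ffunE.
Qed.

Lemma pairs_eq_of_excess0 (z : seq (L * L)) :
  (forall p, p \in z -> piZ (val p.1) = piZ (val p.2)) ->
  (\sum_(p <- z) val p.1 a1 = \sum_(p <- z) val p.2 a1)%N ->
  (\sum_(p <- z) (val p.1 a1 - val p.2 a1))%N = 0%N ->
  forall p, p \in z -> p.1 = p.2.
Proof.
move=> z_pi z_sum En p zp; apply/val_inj/piZ_inj_a1; first exact: z_pi.
move/eqP: (En); rewrite sum_nat_seq_eq0 => /allP/(_ p zp) /=.
rewrite subn_eq0 leq_eqVlt => /orP[/eqP // | lt_p].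
have [q zq lt_q] := exists_lt_of_sum_eq z_sum zp lt_p.
have : (\sum_(p <- z) (val p.1 a1 - val p.2 a1) != 0)%N.
  by rewrite sum_nat_seq_neq0; apply/hasP; exists q; rewrite //= subn_eq0 -ltnNge.
by rewrite En.
Qed.

Section ExchangeCongruence.
Variables (R : comNzRingType) (S : R -> Prop) (t : L -> R).
Hypothesis t_exchange : forall m m' : L, (0 < val m a1)%N -> (0 < val m' a2)%N ->
  ideal_congr S (t m * t m') (t (shiftL m a2 a1) * t (shiftL m' a1 a2)).

Lemma prod_exchange_congr (z : seq (L * L)) :
  (forall p, p \in z -> piZ (val p.1) = piZ (val p.2)) ->
  (\sum_(p <- z) val p.1 a1 = \sum_(p <- z) val p.2 a1)%N ->
  ideal_congr S (\prod_(p <- z) t p.1) (\prod_(p <- z) t p.2).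
Proof.
move En: (\sum_(p <- z) (val p.1 a1 - val p.2 a1))%N => n.
elim: n z En => [|n IH] z En z_pi z_sum.
  suff -> : \prod_(p <- z) t p.1 = \prod_(p <- z) t p.2 by apply: ideal_congr_refl.
  by apply: eq_big_seq => p /(pairs_eq_of_excess0 z_pi z_sum En) ->.
have [p zp lt_p] : exists2 p : L * L, p \in z & (val p.2 a1 < val p.1 a1)%N.
  have : (\sum_(p <- z) (val p.1 a1 - val p.2 a1) != 0)%N by rewrite En.
  by rewrite sum_nat_seq_neq0 => /hasP[p zp]; rewrite /= subn_eq0 -ltnNge; exists p.
have [q zq lt_q] : exists2 q : L * L, q \in z & (val q.1 a1 < val q.2 a1)%N.
  exact: exists_lt_of_sum_eq (esym z_sum) zp lt_p.
have qp : q != p by apply: contraTneq lt_q => ->; rewrite -leqNgt ltnW.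
have Ez := perm_to_rem2 zp zq qp.
have {}z_pi (x : L * L) :
    x \in p :: q :: rem q (rem p z) -> piZ (val x.1) = piZ (val x.2).
  by rewrite -(perm_mem Ez); apply: z_pi.
rewrite !(perm_big _ Ez) !big_cons in En z_sum *.
move: (rem q (rem p z)) En z_sum z_pi => r En z_sum z_pi.
have p1 : (0 < val p.1 a1)%N by apply: leq_ltn_trans lt_p.
have q_in : q \in p :: q :: r by rewrite !inE eqxx orbT.
have q2 : (0 < val q.1 a2)%N by have := piZ_collapsed (z_pi q q_in); lia.
have [pi_p mp1] := shiftL21 p1; have [pi_q mq1] := shiftL12 q2.
apply: (ideal_congr_exchange (t_exchange p1 q2)).
have := IH ((shiftL p.1 a2 a1, p.2) :: (shiftL q.1 a1 a2, q.2) :: r).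
rewrite !big_cons; simpl fst; simpl snd; rewrite mp1 mq1; apply.
(* The tail sums over [r] come from different elaborations; [set] identifies
   them up to conversion, so that [lia] sees a single atom. *)
- by move: En lt_p lt_q => /=; set Dr := (\sum_(j <- r) _)%N; lia.
- move=> x; rewrite !inE => /orP[/eqP -> | /orP[/eqP -> | xr]]; simpl fst; simpl snd.
  + by rewrite pi_p z_pi ?mem_head.
  + by rewrite pi_q z_pi.
  + by rewrite z_pi // !inE xr !orbT.
- move: z_sum p1 => /=; set Sr1 := (\sum_(j <- r) sval j.1 a1)%N.
  by set Sr2 := (\sum_(j <- r) sval j.2 a1)%N; lia.
Qed.

End ExchangeCongruence.

End Collapse.

Theorem lemma9p5 (V A : finType) (src tgt : A -> V) (theta : V -> int)
    (alpha1 alpha2 : A) :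
  no_oriented_cycles src tgt ->
  alpha1 != alpha2 ->
  src alpha1 = src alpha2 ->
  tgt alpha1 = tgt alpha2 ->
  forall u v : {cmonom latt src tgt theta},
    phi (tmon u) = phi (tmon v) ->
    @piF V A src tgt alpha1 alpha2 theta (tmon u) =
      @piF V A src tgt alpha1 alpha2 theta (tmon v) ->
    in_ideal_gen (@G2 V A src tgt alpha1 alpha2 theta) (tmon u - tmon v).
Proof.
move=> _ a12 src12 tgt12 u v phi_uv piF_uv.
have [su Eu] := cmonom_prod_ucm u; have [sv Ev] := cmonom_prod_ucm v.
have [z [z1 z2 z_pi]] :=
  perm_map_pairing (perm_piL_of_piF a12 src12 tgt12 Eu Ev piF_uv).
have -> : tmon u = \prod_(p <- z) tvar p.1 by rewrite (tmon_prod Eu) -z1 big_map.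
have -> : tmon v = \prod_(p <- z) tvar p.2.
  by rewrite (tmon_prod Ev) -(perm_big _ z2) big_map.
apply: (prod_exchange_congr a12 src12 tgt12 (tvar_exchange a12 src12 tgt12)).
  by move=> p /z_pi /(congr1 val).
have := sum_latt_eq_of_phi Eu Ev phi_uv alpha1.
by rewrite -z1 -(perm_big _ z2) !big_map.
Qed.
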